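(* Let $K\subseteq\mathbb{R}^d$ be a convex body and let $r\ge 0$. Let $E$ be a John ellipsoid of $K$, with center $c$, and let $H$ be a hyperplane passing through $c$, which divides $K$ into the two pieces $K^+=K\cap H^+$ and $K^-=K\cap H^-$, where $H^+$ and $H^-$ are the two closed half-spaces bounded by $H$. Then $$\mathsf{Vol}(K^+ + r\mathsf{B})\le\Big(1-\frac{1}{10d^d}\Big)\Big(\mathsf{Vol}(K^+ + r\mathsf{B})+\mathsf{Vol}(K^- + r\mathsf{B})\Big).$$
   Context: A convex body is a compact convex subset of $\mathbb{R}^d$ with nonempty interior. $\mathsf{B}$ is the closed unit Euclidean ball in $\mathbb{R}^d$, $+$ denotes Minkowski sum $X+Y=\{x+y:x\in X,y\in Y\}$, and $\mathsf{Vol}$ is Lebesgue measure. A John ellipsoid of $K$ is a set $E=A^{-1}(q+\mathsf{B})$, where $q\in\mathbb{R}^d$ and $A$ is an invertible linear map such that $q+\mathsf{B}\subseteq A(K)\subseteq q+d\mathsf{B}$ (such $q$ and $A$ always exist); its center is $A^{-1}q$. *)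

From HB Require Import structures.
From mathcomp Require Import all_boot all_order all_algebra.
From mathcomp Require Import all_classical all_reals all_analysis.
Set Implicit Arguments. Unset Strict Implicit. Unset Printing Implicit Defensive.
Import Order.TTheory GRing.Theory Num.Theory.
Import numFieldNormedType.Exports.
Local Open Scope classical_set_scope.
Local Open Scope ring_scope.

(* Points of R^d are row vectors 'rV[R]_d (with the product topology,
   which is the Euclidean topology). Linear maps act by x |-> x *m A. *)

Definition jl_dotv (R : realType) (d : nat) (x y : 'rV[R]_d) : R :=
  \sum_(i < d) x 0 i * y 0 i.

Definition jl_unit_ball (R : realType) (d : nat) : set 'rV[R]_d :=
  [set x | jl_dotv x x <= 1].

Definition jl_msum (R : realType) (d : nat) (X Y : set 'rV[R]_d) : set 'rV[R]_d :=
  [set z | exists2 x, X x & exists2 y, Y y & z = x + y].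

Definition jl_sdil (R : realType) (d : nat) (t : R) (X : set 'rV[R]_d) : set 'rV[R]_d :=
  [set t *: x | x in X].

Definition jl_stransl (R : realType) (d : nat) (q : 'rV[R]_d) (X : set 'rV[R]_d) :
  set 'rV[R]_d := [set q + x | x in X].

Definition jl_convex_set (R : realType) (d : nat) (K : set 'rV[R]_d) : Prop :=
  forall x y (t : R), K x -> K y -> 0 <= t <= 1 -> K ((1 - t) *: x + t *: y).

Definition jl_convex_body (R : realType) (d : nat) (K : set 'rV[R]_d) : Prop :=
  compact K /\ jl_convex_set K /\ (interior K !=set0).

Definition jl_box (R : realType) (d : nat) (a b : 'rV[R]_d) : set 'rV[R]_d :=
  [set x | forall i, a 0 i <= x 0 i <= b 0 i].

Definition jl_lebesgue_vol (R : realType) (d : nat) (A : set 'rV[R]_d) : \bar R :=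
  ereal_inf [set s : \bar R | exists a b : nat -> 'rV[R]_d,
     [/\ (forall k i, a k 0 i <= b k 0 i),
         A `<=` \bigcup_k jl_box (a k) (b k) &
         s = (\sum_(0 <= k <oo) (\prod_(i < d) (b k 0 i - a k 0 i))%:E)%E]].

Definition jl_hplus (R : realType) (d : nat) (c u : 'rV[R]_d) : set 'rV[R]_d :=
  [set x | 0 <= jl_dotv (x - c) u].
Definition jl_hminus (R : realType) (d : nat) (c u : 'rV[R]_d) : set 'rV[R]_d :=
  [set x | jl_dotv (x - c) u <= 0].

From HB Require Import structures.
From mathcomp Require Import all_boot all_order all_algebra.
From mathcomp Require Import all_classical all_reals all_analysis.
From mathcomp Require Import ring lra.
Set Implicit Arguments. Unset Strict Implicit. Unset Printing Implicit Defensive.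
Import Order.TTheory GRing.Theory Num.Theory.
Import numFieldNormedType.Exports.
Local Open Scope classical_set_scope.
Local Open Scope ring_scope.

(* Since E = c + A^-1 B lies in K and K lies in c + d A^-1 B, the map
   x |-> c - (x - c) / d sends K into E, hence into K, and it swaps the two
   sides of any hyperplane through c. So the homothety of ratio -d centred
   at c maps K^- + rB onto a superset of K^+ + rB, whence
   Vol(K^+ + rB) <= d^d Vol(K^- + rB), which gives the bound with the
   better constant d^d / (1 + d^d). *)

Section Dot.
Variables (R : realType) (d : nat).
Implicit Types (x y : 'rV[R]_d) (a : R).

Lemma jl_dotvZl a x y : jl_dotv (a *: x) y = a * jl_dotv x y.
Proof. by rewrite /jl_dotv mulr_sumr; apply: eq_bigr => i _; rewrite mxE mulrA. Qed.

Lemma jl_dotvZr a x y : jl_dotv x (a *: y) = a * jl_dotv x y.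
Proof. by rewrite /jl_dotv mulr_sumr; apply: eq_bigr => i _; rewrite mxE; ring. Qed.

Lemma jl_dotv_ge0 x : 0 <= jl_dotv x x.
Proof. by apply: sumr_ge0 => i _; rewrite -expr2 sqr_ge0. Qed.

Lemma jl_unit_ballZ a x :
  `|a| <= 1 -> jl_unit_ball x -> jl_unit_ball (a *: x).
Proof.
move=> a1 Bx; rewrite /jl_unit_ball /= jl_dotvZl jl_dotvZr mulrA -expr2.
have a21 : a ^+ 2 <= 1 by rewrite -real_normK ?num_real // expr_le1.
have := jl_dotv_ge0 x; rewrite /jl_unit_ball /= in Bx; nra.
Qed.

End Dot.

Section Volume.
Variables (R : realType) (d : nat).
Implicit Types (X Y : set 'rV[R]_d).

Lemma jl_vol_ge0 X : (0 <= jl_lebesgue_vol X)%E.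
Proof.
apply: le_ereal_inf_tmp => s [a [b [hab _ ->]]].
apply: nneseries_ge0 => k _ _; rewrite lee_fin; apply: prodr_ge0 => i _.
by rewrite subr_ge0 hab.
Qed.

Variables (t : R) (w : 'rV[R]_d).
Hypothesis t_gt0 : 0 < t.

Lemma jl_vol_le_homothetic_cover X Y (a b : nat -> 'rV[R]_d) :
  X `<=` [set w - t *: y | y in Y] ->
  (forall k i, a k 0 i <= b k 0 i) -> Y `<=` \bigcup_k jl_box (a k) (b k) ->
  (jl_lebesgue_vol X <=
   (t ^+ d)%:E * \sum_(0 <= k <oo) (\prod_(i < d) (b k 0 i - a k 0 i))%:E)%E.
Proof.
move=> hX hab hY; rewrite -nneseriesZl; last first.
  by move=> k _; rewrite lee_fin; apply: prodr_ge0 => i _; rewrite subr_ge0 hab.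
apply: ereal_inf_lbound.
exists (fun k => w - t *: b k), (fun k => w - t *: a k); split.
- by move=> k i; rewrite !mxE lerD2l lerN2 ler_pM2l.
- move=> x /hX [y /hY [k _ hk] <-]; exists k => // i.
  have /andP[h1 h2] := hk i.
  by rewrite !mxE lerD2l lerN2 ler_pM2l // lerD2l lerN2 ler_pM2l // h1 h2.
- apply: eq_eseriesr => k _; rewrite -EFinM; congr EFin; symmetry.
  rewrite (eq_bigr (fun i => t * (b k 0 i - a k 0 i))) => [|i _].
    by rewrite big_split /= prodr_const card_ord.
  by rewrite !mxE; ring.
Qed.

Lemma jl_vol_le_homothety X Y :
  X `<=` [set w - t *: y | y in Y] ->
  (jl_lebesgue_vol X <= (t ^+ d)%:E * jl_lebesgue_vol Y)%E.
Proof.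
move=> hX; have td : 0 < t ^+ d by rewrite exprn_gt0.
have hY : ((t ^+ d)^-1%:E * jl_lebesgue_vol X <= jl_lebesgue_vol Y)%E.
  apply: le_ereal_inf_tmp => s [a [b [hab hcov ->]]].
  apply: le_trans (lee_wpmul2l _ (jl_vol_le_homothetic_cover hX hab hcov)) _.
    by rewrite lee_fin invr_ge0 ltW.
  by rewrite muleA -EFinM mulVf ?gt_eqF // mul1e.
apply: le_trans (lee_wpmul2l _ hY); last by rewrite lee_fin ltW.
by rewrite muleA -EFinM mulfV ?gt_eqF // mul1e.
Qed.

End Volume.

Lemma jl_msum_homothety (R : realType) (d : nat) (t r : R) (w : 'rV[R]_d)
    (X Y : set 'rV[R]_d) :
  1 <= t -> X `<=` [set w - t *: y | y in Y] ->
  jl_msum X (jl_sdil r (@jl_unit_ball R d)) `<=`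
  [set w - t *: y | y in jl_msum Y (jl_sdil r (@jl_unit_ball R d))].
Proof.
move=> t1 hXY z [x /hXY [y Yy <-] [_ [b Bb <-] ->]].
have t0 : 0 < t by apply: lt_le_trans t1.
have tn0 : t != 0 by rewrite gt_eqF.
exists (y + r *: (- t^-1 *: b)).
  exists y => //; exists (r *: (- t^-1 *: b)) => //; exists (- t^-1 *: b) => //.
  apply: jl_unit_ballZ Bb.
  rewrite normrN ger0_norm; first by rewrite invf_le1.
  by rewrite invr_ge0 ltW.
by apply/matrixP => i j; rewrite !mxE; field.
Qed.

Lemma jl_john_halfspace_reflection (R : realType) (d : nat) (K : set 'rV[R]_d)
    (A : 'M[R]_d) (q c u : 'rV[R]_d) (t : R) :
  0 < t -> A \in unitmx ->
  jl_stransl q (@jl_unit_ball R d) `<=` [set x *m A | x in K] ->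
  [set x *m A | x in K] `<=` jl_stransl q (jl_sdil t (@jl_unit_ball R d)) ->
  c *m A = q ->
  K `&` jl_hplus c u `<=` [set (1 + t) *: c - t *: y | y in K `&` jl_hminus c u].
Proof.
move=> t0 hA hin hout hc x [Kx Hx]; have tn0 : t != 0 by rewrite gt_eqF.
have [_ [b Bb <-] hxA] : jl_stransl q (jl_sdil t (@jl_unit_ball R d)) (x *m A).
  by apply: hout; exists x.
have [y Ky hyA] : [set x *m A | x in K] (q - b).
  apply: hin; exists (- b) => //; rewrite -scaleN1r.
  by apply: jl_unit_ballZ Bb; rewrite normrN1.
have hy : y = c - t^-1 *: (x - c).
  apply: (can_inj (mulmxK hA)); rewrite hyA mulmxBl -scalemxAl mulmxBl hc -hxA.
  by apply/matrixP => i j; rewrite !mxE; field.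
exists y.
  split=> //; rewrite /jl_hminus /= hy addrAC subrr add0r -scaleNr jl_dotvZl.
  by rewrite mulNr oppr_le0 mulr_ge0 // invr_ge0 ltW.
by rewrite hy; apply/matrixP => i j; rewrite !mxE; field.
Qed.

Lemma lee_share_of_lee_mul (R : realType) (s : R) (x y : \bar R) :
  1 <= s -> (0 <= x)%E -> (0 <= y)%E -> (x <= s%:E * y)%E ->
  (x <= (1 - (10 * s)^-1)%:E * (x + y))%E.
Proof.
move=> s1 + + hxy; have s0 : 0 < s by apply: lt_le_trans s1.
set e := (10 * s)^-1.
have he : e * (10 * s) = 1 by rewrite mulVf // gt_eqF // mulr_gt0.
have e0 : 0 <= e by rewrite invr_ge0 mulr_ge0 // ltW.
have e1 : 0 < 1 - e by nra.
move: hxy; case: x => [x| |]; case: y => [y| |] //.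
- rewrite !lee_fin => sy x0 y0.
  have : e * x <= e * (s * y) by rewrite ler_wpM2l.
  nra.
- by move=> *; rewrite /= gt0_muley ?leey // lte_fin.
- by move=> *; rewrite /= gt0_muley ?leey // lte_fin.
Qed.

Theorem lemma4p1 (R : realType) (d : nat) (K : set 'rV[R]_d) (r : R)
  (A : 'M[R]_d) (q c u : 'rV[R]_d) :
  jl_convex_body K -> 0 <= r ->
  (* E = A^{-1}(q + B) is a John ellipsoid of K, with center c = A^{-1} q *)
  A \in unitmx ->
  jl_stransl q (@jl_unit_ball R d) `<=` [set x *m A | x in K] ->
  [set x *m A | x in K] `<=` jl_stransl q (jl_sdil d%:R (@jl_unit_ball R d)) ->
  c *m A = q ->
  (* H = {x | <x - c, u> = 0} is a hyperplane through c *)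
  u != 0 ->
  (jl_lebesgue_vol (jl_msum (K `&` jl_hplus c u)
                             (jl_sdil r (@jl_unit_ball R d))) <=
   (1 - (10 * d%:R ^+ d)^-1)%:E *
   adde (jl_lebesgue_vol (jl_msum (K `&` jl_hplus c u)
                                  (jl_sdil r (@jl_unit_ball R d))))
        (jl_lebesgue_vol (jl_msum (K `&` jl_hminus c u)
                                  (jl_sdil r (@jl_unit_ball R d)))))%E.
Proof.
move=> _ _ hA hin hout hc u0.
have d_gt0 : (0 < d)%N.
  move: u0; apply: contraNT; rewrite -leqNgt leqn0 => /eqP d0.
  by apply/eqP/matrixP => i j; move: (ltn_ord j); rewrite [X in (_ < X)%N]d0.
have d1 : 1 <= d%:R :> R by rewrite ler1n.
have d0 : 0 < d%:R :> R by apply: lt_le_trans d1.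
apply: lee_share_of_lee_mul; [exact: exprn_ege1 | exact: jl_vol_ge0 | exact: jl_vol_ge0 |].
apply: jl_vol_le_homothety => //; apply: jl_msum_homothety => //.
exact: jl_john_halfspace_reflection hin hout hc.
Qed.
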